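(* Let $N\ge K\ge1$, $C>0$, $\epsilon_p,\epsilon_l>0$, and let $\bm U=(U_1,\dots,U_N)$ be a vector of positive feature importances (fixed independently of the input). Consider the R$^3$eLU-forward procedure with dynamic privacy budget allocation: compute $\hat{\bm v}=ClipK(\bm v,C,K,N)$; set $p_i=\frac12+\frac{U_i}{\|\bm U\|_\infty}\big(\frac{e^{\epsilon_p/K}}{1+e^{\epsilon_p/K}}-\frac12\big)$; independently draw $s_i\sim\mathrm{Bernoulli}(p_i)$ and Laplace noise $L_i$ for coordinate $i$ calibrated to the allocated budget $\epsilon_l U_i/\sum_{j=1}^N U_j$ (i.e. $L_i\sim\mathrm{Lap}\big(0,\,2KC\sum_{j}U_j/(\epsilon_l U_i)\big)$); output $\tilde a_i=\max(\hat v_i+L_i,0)$ if $s_i=1$ and $\tilde a_i=0$ otherwise. Then this procedure is still $\epsilon$-differentially private with $\epsilon=\epsilon_p+\epsilon_l$.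
   Context: $ClipK(\bm{v},C,K,N)$: given $\bm{v}\in\mathbb{R}^N$, keep the $K$ largest entries of $\bm{v}$ and set all other entries to $0$; then clip each kept entry into the interval $[0,C]$. $\mathrm{Lap}(0,b)$ is the Laplace distribution with mean $0$ and scale $b$. A randomized mechanism $\mathcal{M}$ is $\epsilon$-DP if for any two inputs $x,x'$ and every measurable output set $S$, $\Pr[\mathcal{M}(x)\in S]\le e^{\epsilon}\Pr[\mathcal{M}(x')\in S]$. *)

From HB Require Import structures.
From mathcomp Require Import all_boot all_order all_algebra.
From mathcomp Require Import all_classical all_reals all_analysis.
Set Implicit Arguments. Unset Strict Implicit. Unset Printing Implicit Defensive.
Import Order.TTheory GRing.Theory Num.Theory.
Local Open Scope classical_set_scope.
Local Open Scope ring_scope.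

Definition topk_rank (R : realType) (N : nat) (v : 'I_N -> R) (i : 'I_N) : nat :=
  #|[set j : 'I_N | (v i < v j) || ((v j == v i) && (j < i)%N)]|.

(* ClipK(v, C, K, N): keep the K largest entries (ties broken by index),
   zero the others, then clip kept entries into [0, C]. *)
Definition clipK (R : realType) (N : nat) (v : 'I_N -> R) (C : R) (K : nat)
  : 'I_N -> R :=
  fun i => if (topk_rank v i < K)%N then Num.min (Num.max (v i) 0) C else 0.

Definition laplace_pdf (R : realType) (b : R) (x : R) : R :=
  (2 * b)^-1 * expR (- (`|x| / b)).

Definition linf_norm (R : realType) (N : nat) (U : 'I_N -> R) : R :=
  \big[Num.max/0]_(i < N) `|U i|.
Definition vsum (R : realType) (N : nat) (U : 'I_N -> R) : R := \sum_(i < N) U i.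

Definition sel_prob (R : realType) (N K : nat) (eps_p : R) (U : 'I_N -> R)
  (i : 'I_N) : R :=
  2^-1 + U i / linf_norm U *
    (expR (eps_p / K%:R) / (1 + expR (eps_p / K%:R)) - 2^-1).

Definition lap_scale (R : realType) (N K : nat) (C eps_l : R) (U : 'I_N -> R)
  (i : 'I_N) : R :=
  2 * K%:R * C * vsum U / (eps_l * U i).

Definition r3elu_out (R : realType) (N K : nat) (C : R) (v : 'I_N -> R)
  (s : 'I_N -> bool) (L : 'I_N -> R) : N.-tuple R :=
  [tuple (if s i then Num.max (clipK v C K i + L i) 0 else 0) | i < N].

Definition mutually_independent d (T : measurableType d) (R : realType)
  (P : probability T R) (N : nat) (s : 'I_N -> T -> bool) (L : 'I_N -> T -> R)
  : Prop :=
  forall (B : 'I_N -> set bool) (A : 'I_N -> set R),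
    (forall i, measurable (A i)) ->
    P (\big[setI/setT]_(i < N) (s i @^-1` B i `&` L i @^-1` A i)) =
    (\prod_(i < N) (P (s i @^-1` B i) * P (L i @^-1` A i)))%E.

From HB Require Import structures.
From mathcomp Require Import all_boot all_order all_algebra.
From mathcomp Require Import all_classical all_reals all_analysis.
From mathcomp Require Import ring lra measurable_realfun.
Import Order.TTheory GRing.Theory Num.Theory.
Local Open Scope classical_set_scope.
Local Open Scope ring_scope.

(* Write c = ClipK(v) and c' = ClipK(v').  Coordinate i of the output is
   relu_unit c_i s_i L_i, where relu_unit c b x = (if b then max(c + x, 0)
   else 0), and all coordinates of c and c' lie in [0, C], so that
   |c_i - c'_i| <= C.  The proof has three ingredients.
   - Laplace shift: Lebesgue measure is translation invariant and the
     Laplace density of scale b changes by at most e^{|t|/b} under a shift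
     by t, so P(L_i + t \in E) <= e^{|t|/b_i} P(L_i \in E).
   - Rectangles: splitting over the selection pattern and using
     independence, the probability that every output coordinate lies in a
     measurable set B_i is a sum of products of one-coordinate
     probabilities; the selection factors do not depend on the input and
     the noise factors differ by a shift, so the ratio is at most
     exp(sum_i C / b_i) = exp(eps_l / (2K)).
   - Extension: a domination mu(Y1^-1 S) <= k mu(Y2^-1 S) between the laws
     of two random tuples that holds on rectangles holds on all measurable
     S, since it holds on a ring of finite Boolean combinations of
     coordinate conditions generating the product sigma-algebra, and the
     dominated sets form a monotone class.
   Since the selection bits are independent of the input, they cost no
   privacy, and exp(eps_l / (2K)) <= exp(eps_p + eps_l). *)

Section finite_set_operations.
Context (I : choiceType) (T : Type) (r : seq I) (P : pred I) (F : I -> set T).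

Lemma in_bigsetI w :
  (\big[setI/setT]_(i <- r | P i) F i) w <-> (forall i, i \in r -> P i -> F i w).
Proof.
rewrite -bigcap_seq_cond; split=> [Fw i ir Pi|Fw i /andP[]]; last exact: Fw.
by apply: Fw; rewrite /= ir.
Qed.

Lemma in_bigsetU w :
  (\big[setU/set0]_(i <- r | P i) F i) w <-> (exists i, [/\ i \in r, P i & F i w]).
Proof.
rewrite -bigcup_seq_cond; split=> [[i /andP[ir Pi] Fiw]|[i [ir Pi Fiw]]].
  by exists i.
by exists i; rewrite /= ?ir.
Qed.

End finite_set_operations.

Section finite_additivity.
Context (R : realType) (d : measure_display) (T : ringOfSetsType d)
  (mu : {content set T -> \bar R}).
Local Open Scope ereal_scope.

Lemma content_disjoint_bigsetU (I : choiceType) (r : seq I) (P : pred I)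
    (F : I -> set T) : uniq r ->
  (forall i, measurable (F i)) -> (forall i j, i != j -> F i `&` F j = set0) ->
  mu (\big[setU/set0]_(i <- r | P i) F i) = \sum_(i <- r | P i) mu (F i).
Proof.
move=> + mF dF; elim: r => [|a r IH]; first by rewrite !big_nil measure0.
move=> /= /andP[ar ur]; rewrite !big_cons; case: ifP => Pa; last exact: IH.
rewrite measureU ?IH //; first exact: bigsetU_measurable.
apply/seteqP; split => // w [Faw /in_bigsetU [i [ir _ Fiw]]].
have ai : a != i by apply: contraNneq ar => ->.
by rewrite -(dF _ _ ai).
Qed.

End finite_additivity.

Lemma lee_prod_ge0 (R : realDomainType) (I : Type) (r : seq I) (P : pred I)
    (f g : I -> \bar R) :
  (forall i, P i -> (0 <= f i)%E) -> (forall i, P i -> (f i <= g i)%E) ->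
  (\prod_(i <- r | P i) f i <= \prod_(i <- r | P i) g i)%E.
Proof.
move=> f0 fg; elim: r => [|a r IH]; first by rewrite !big_nil.
rewrite !big_cons; case: ifP => Pa //.
by apply: lee_pmul; [exact: f0|exact: prode_ge0|exact: fg|exact: IH].
Qed.

Section pattern_sets.
Context {dX : measure_display} {X : measurableType dX} {N : nat}.

Definition rectangle (B : 'I_N -> set X) : set (N.-tuple X) :=
  [set t | forall i, B i (tnth t i)].

Lemma measurable_rectangle (B : 'I_N -> set X) :
  (forall i, measurable (B i)) -> measurable (rectangle B).
Proof.
move=> mB.
have -> : rectangle B = \big[setI/setT]_(i < N) ((fun t => tnth t i) @^-1` B i).
  apply/seteqP; split => t; first by move=> Bt; apply/in_bigsetI => i _ _; exact: Bt.
  by move/in_bigsetI => Bt i; exact: Bt i (mem_index_enum _) isT.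
apply: bigsetI_measurable => i _; rewrite -[E in measurable E]setTI.
exact: measurable_tnth.
Qed.

(* Given m measurable sets A j i on each coordinate i, a tuple t has the
   pattern recording whether t_i lies in A j i for every j and i; sets of
   tuples defined by a condition on the pattern form a ring of sets that
   generates the product sigma-algebra. *)
Definition pattern {m} (A : 'I_m -> 'I_N -> set X) (t : N.-tuple X) :
    {ffun 'I_m * 'I_N -> bool} :=
  [ffun p => `[< A p.1 p.2 (tnth t p.2) >]].

Definition pattern_side {m} (A : 'I_m -> 'I_N -> set X)
    (z : {ffun 'I_m * 'I_N -> bool}) (i : 'I_N) : set X :=
  \big[setI/setT]_(j < m) (if z (j, i) then A j i else ~` A j i).

Lemma pattern_sideP m (A : 'I_m -> 'I_N -> set X) z t :
  rectangle (pattern_side A z) t <-> pattern A t = z.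
Proof.
split=> [zt|<- i]; last first.
  by apply/in_bigsetI => j _ _; rewrite ffunE; case: asboolP.
apply/ffunP => -[j i]; rewrite ffunE /=.
have /in_bigsetI/(_ j (mem_index_enum _) isT) := zt i.
by case: (z (j, i)) => ?; apply/asboolP.
Qed.

Lemma measurable_pattern_side m (A : 'I_m -> 'I_N -> set X) z i :
  (forall j i, measurable (A j i)) ->
  measurable (pattern_side A z i).
Proof.
move=> mA; apply: bigsetI_measurable => j _.
by case: (z (j, i)); [exact: mA|exact/measurableC/mA].
Qed.

Lemma preimage_pattern_set (T : Type) (Y : T -> N.-tuple X) m
    (A : 'I_m -> 'I_N -> set X)
    (Z : pred {ffun 'I_m * 'I_N -> bool}) :
  Y @^-1` [set t | Z (pattern A t)] =
  \big[setU/set0]_(z | Z z) Y @^-1` rectangle (pattern_side A z).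
Proof.
apply/seteqP; split => w /=.
  move=> Zw; apply/in_bigsetU; exists (pattern A (Y w)).
  by split=> //; [exact: mem_index_enum|exact/pattern_sideP].
by move/in_bigsetU => [z [_ Zz /pattern_sideP ->]].
Qed.

Lemma pattern_rectangles_disjoint (T : Type) (Y : T -> N.-tuple X) m
    (A : 'I_m -> 'I_N -> set X) z z' :
  z != z' -> Y @^-1` rectangle (pattern_side A z) `&`
             Y @^-1` rectangle (pattern_side A z') = set0.
Proof.
move=> zz'; apply/seteqP; split => // w [/pattern_sideP e /pattern_sideP e'].
by move: zz'; rewrite -e -e' eqxx.
Qed.

Definition pattern_sets : set (set (N.-tuple X)) :=
  [set S | exists m (A : 'I_m -> 'I_N -> set X)
             (Z : pred {ffun 'I_m * 'I_N -> bool}),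
     (forall j i, measurable (A j i)) /\ S = [set t | Z (pattern A t)]].

Lemma pattern_set_measurable S : pattern_sets S -> measurable S.
Proof.
move=> [m [A [Z [mA ->]]]]; rewrite -[E in measurable E]preimage_id.
rewrite (preimage_pattern_set _ id); apply: bigsetU_measurable => z _.
by apply: measurable_rectangle => i; exact: measurable_pattern_side.
Qed.

(* Two pattern sets can be described with a common family of sets, by
   concatenating the two families. *)
Lemma pattern_sets_common {S1 S2 : set (N.-tuple X)} :
  pattern_sets S1 -> pattern_sets S2 ->
  exists m (A : 'I_m -> 'I_N -> set X) (Z1 Z2 : pred {ffun 'I_m * 'I_N -> bool}),
    [/\ (forall j i, measurable (A j i)), S1 = [set t | Z1 (pattern A t)] &
        S2 = [set t | Z2 (pattern A t)]].
Proof.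
move=> [m1 [A1 [Z1 [mA1 ->]]]] [m2 [A2 [Z2 [mA2 ->]]]].
pose A j := match fintype.split j with inl j1 => A1 j1 | inr j2 => A2 j2 end.
have patternA1 t : [ffun p => pattern A t (lshift m2 p.1, p.2)] = pattern A1 t.
  by apply/ffunP => p; rewrite !ffunE /A /= (unsplitK (inl _)).
have patternA2 t : [ffun p => pattern A t (rshift m1 p.1, p.2)] = pattern A2 t.
  by apply/ffunP => p; rewrite !ffunE /A /= (unsplitK (inr _)).
exists (m1 + m2)%N, A, (fun z => Z1 [ffun p => z (lshift m2 p.1, p.2)]),
  (fun z => Z2 [ffun p => z (rshift m1 p.1, p.2)]).
split; first by move=> j i; rewrite /A; case: (fintype.split j).
- by apply/seteqP; split => t /=; rewrite patternA1.
- by apply/seteqP; split => t /=; rewrite patternA2.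
Qed.

Lemma pattern_sets_setring : setring pattern_sets.
Proof.
split.
- by exists 0%N, (fun _ _ => set0), pred0; split => //; apply/seteqP; split.
- move=> S1 S2 S1p S2p.
  have [m [A [Z1 [Z2 [mA -> ->]]]]] := pattern_sets_common S1p S2p.
  exists m, A, (fun z => Z1 z || Z2 z); split => //.
  by apply/seteqP; split => t /=; [case=> ->; rewrite ?orbT|case/orP; [left|right]].
- move=> S1 S2 S1p S2p.
  have [m [A [Z1 [Z2 [mA -> ->]]]]] := pattern_sets_common S1p S2p.
  exists m, A, (fun z => Z1 z && ~~ Z2 z); split => //.
  by apply/seteqP; split => t /=; [case=> -> /negP ->|case/andP => -> /negP].
Qed.

Lemma measurable_sub_pattern_sets :
  measurable `<=` <<sr pattern_sets>>.
Proof.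
apply: smallest_sub.
- have [G0 GD GU] := smallest_sigma_ring pattern_sets.
  split=> // A GA; apply: GD => //; apply: sub_g_sigma_ring.
  by exists 0%N, (fun _ _ => set0), predT; split => //; apply/seteqP; split.
- move=> _ /in_bigsetU [i [_ _ [B mB <-]]]; apply: sub_g_sigma_ring.
  exists 1%N, (fun _ _ => B), (fun z => z (ord0, i)); split => //.
  by apply/seteqP; split => t /=; rewrite ffunE; [case=> _ /asboolP|move/asboolP].
Qed.

End pattern_sets.

Lemma lee_cvg_scale (R : realType) (k : R) (u v : (\bar R)^nat) (a b : \bar R) :
  b \is a fin_num -> u @ \oo --> a -> v @ \oo --> b ->
  (forall n, (u n <= k%:E * v n)%E) -> (a <= k%:E * b)%E.
Proof.
move=> bfin ua vb uv.
have kvb : (fun n => k%:E * v n)%E @ \oo --> (k%:E * b)%E.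
  by apply: cvgeM; [exact: mule_def_fin|exact: cvg_cst|exact: vb].
rewrite -(cvg_lim _ ua) // -(cvg_lim _ kvb) //.
by apply: lee_lim; [exact: cvgP ua|exact: cvgP kvb|exact: nearW].
Qed.

Section law_comparison.
Context {R : realType} {d : measure_display} {T : measurableType d}
  (mu : {finite_measure set T -> \bar R})
  {dX : measure_display} {X : measurableType dX} {N : nat}
  (Y1 Y2 : T -> N.-tuple X) {k : R}.
Hypotheses (mY1 : measurable_fun [set: T] Y1) (mY2 : measurable_fun [set: T] Y2)
  (rectangle_le : forall B : 'I_N -> set X, (forall i, measurable (B i)) ->
     (mu (Y1 @^-1` rectangle B) <= k%:E * mu (Y2 @^-1` rectangle B))%E).
Local Open Scope ereal_scope.

Let dominated : set (set (N.-tuple X)) :=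
  [set S | measurable S /\ mu (Y1 @^-1` S) <= k%:E * mu (Y2 @^-1` S)].

Let measurable_preimage (Y : T -> N.-tuple X) S :
  measurable_fun [set: T] Y -> measurable S -> measurable (Y @^-1` S).
Proof. by move=> mY mS; rewrite -[E in measurable E]setTI; exact: mY. Qed.

Let pattern_sets_dominated : pattern_sets `<=` dominated.
Proof.
move=> S PS; split; first exact: pattern_set_measurable.
have [m [A [Z [mA ->]]]] := PS.
have mrect Y z : measurable_fun [set: T] Y ->
    measurable (Y @^-1` rectangle (pattern_side A z)).
  move=> mY; apply: measurable_preimage mY _.
  by apply: measurable_rectangle => i; exact: measurable_pattern_side.
rewrite !preimage_pattern_set !content_disjoint_bigsetU //;
  [|exact: index_enum_uniq|by move=> z; exact: mrect|
    by move=> *; exact: pattern_rectangles_disjoint|exact: index_enum_uniq|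
    by move=> z; exact: mrect|by move=> *; exact: pattern_rectangles_disjoint].
rewrite ge0_sume_distrr; last by move=> z _; exact: measure_ge0.
apply: lee_sum => z _; apply: rectangle_le => i; exact: measurable_pattern_side.
Qed.

Let dominated_monotone : monotone dominated.
Proof.
split=> F monoF dF.
- have mF n : measurable (F n) by case: (dF n).
  split; first exact: bigcup_measurable.
  have cvgY Y : measurable_fun [set: T] Y ->
      (fun n => mu (Y @^-1` F n)) @ \oo --> mu (Y @^-1` \bigcup_n F n).
    move=> mY; rewrite preimage_bigcup; apply: nondecreasing_cvg_mu.
    + by move=> n; exact: measurable_preimage.
    + by apply: bigcup_measurable => n _; exact: measurable_preimage.
    + by move=> n m /monoF/subsetPset F_nm; apply/subsetPset => w /F_nm.
  apply: lee_cvg_scale (cvgY _ mY1) (cvgY _ mY2) (fun n => (dF n).2).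
  apply: fin_num_measure; apply: measurable_preimage mY2 _.
  exact: bigcup_measurable.
- have mF n : measurable (F n) by case: (dF n).
  split; first exact: bigcapT_measurable.
  have cvgY Y : measurable_fun [set: T] Y ->
      (fun n => mu (Y @^-1` F n)) @ \oo --> mu (Y @^-1` \bigcap_n F n).
    move=> mY; rewrite preimage_bigcap; apply: nonincreasing_cvg_mu.
    + rewrite -ge0_fin_numE //; apply: fin_num_measure; exact: measurable_preimage.
    + by move=> n; exact: measurable_preimage.
    + by apply: bigcapT_measurable => n; exact: measurable_preimage.
    + by move=> n m /monoF/subsetPset F_nm; apply/subsetPset => w /F_nm.
  apply: lee_cvg_scale (cvgY _ mY1) (cvgY _ mY2) (fun n => (dF n).2).
  apply: fin_num_measure; apply: measurable_preimage mY2 _.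
  exact: bigcapT_measurable.
Qed.

(* Domination on rectangles extends to all measurable sets: it holds on the
   ring of pattern sets, and the dominated sets form a monotone class. *)
Lemma law_le_of_rectangles S : measurable S ->
  mu (Y1 @^-1` S) <= k%:E * mu (Y2 @^-1` S).
Proof.
move=> /measurable_sub_pattern_sets.
rewrite -g_monotone_g_sigma_ring; last exact: pattern_sets_setring.
by move=> /(_ _ (conj dominated_monotone pattern_sets_dominated)) [].
Qed.

End law_comparison.

Section laplace_shift.
Context (R : realType).
Local Open Scope ereal_scope.
Local Notation leb := (@lebesgue_measure R).

Lemma measurable_shift (t : R) :
  measurable_fun (T:=measurableTypeR R) (U:=measurableTypeR R) [set: R]
    (fun x => x + t)%R.
Proof. exact: measurable_funD. Qed.

(* Translation invariance: Lebesgue measure agrees with its image under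
   x |-> x + t on half-open intervals, hence everywhere. *)
Lemma lebesgue_measure_shift (t : R) (A : set R) : measurable A ->
  pushforward leb (fun x => x + t)%R A = leb A.
Proof.
move=> mA; rewrite -(@lebesgue_measure_unique R
  (measure_function_pushforward__canonical__measure_function_Measure leb
     (measurable_shift t))) // => _ [[a b] _ <-] /=; rewrite /pushforward.
have -> : (fun x => x + t)%R @^-1` `]a, b]%classic = `](a - t)%R, (b - t)%R]%classic.
  by apply/seteqP; split => x /=; rewrite !in_itv /= ltrBlDr lerBrDr.
rewrite !lebesgue_measure_itv /= !lte_fin ltrD2r.
by case: ifP => // _; congr (_%:E); lra.
Qed.

Lemma measurable_laplace_pdf (b : R) :
  measurable_fun [set: R] (fun x => (laplace_pdf b x)%:E).
Proof.
apply/measurable_EFinP; apply: measurable_funM => //.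
apply: measurableT_comp; first exact: measurable_expR.
apply: measurableT_comp => //; exact: measurable_funM.
Qed.

Lemma laplace_pdf_ge0 (b x : R) : (0 <= b)%R -> (0 <= laplace_pdf b x)%R.
Proof.
by move=> b0; rewrite /laplace_pdf mulr_ge0 ?expR_ge0 // invr_ge0 mulr_ge0.
Qed.

(* Shifting the argument by t changes the Laplace density by a factor of at
   most e^{|t|/b}, by the triangle inequality. *)
Lemma laplace_pdf_shift_le (b t y : R) : (0 < b)%R ->
  (laplace_pdf b (y - t) <= expR (`|t| / b) * laplace_pdf b y)%R.
Proof.
move=> b0; rewrite /laplace_pdf mulrCA; apply: ler_wpM2l.
  by rewrite invr_ge0 mulr_ge0 ?ltW.
rewrite -expRD ler_expR -mulNr -mulrBl ler_pM2r ?invr_gt0 //.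
by have := ler_normD (y - t)%R t; rewrite subrK; lra.
Qed.

Lemma laplace_mass_shift_le (b t : R) (E : set R) : (0 < b)%R -> measurable E ->
  \int[leb]_(x in (fun x => x + t)%R @^-1` E) (laplace_pdf b x)%:E <=
  (expR (`|t| / b))%:E * \int[leb]_(x in E) (laplace_pdf b x)%:E.
Proof.
move=> b0 mE.
have pdf0 y : 0 <= (laplace_pdf b y)%:E by rewrite lee_fin laplace_pdf_ge0 ?ltW.
have mpdf_shift : measurable_fun [set: R] (fun y => (laplace_pdf b (y - t))%:E).
  exact: measurableT_comp (measurable_laplace_pdf b) (measurable_funD _ _).
rewrite [X in X <= _](_ : _ = \int[leb]_(x in (fun x => x + t)%R @^-1` E)
    ((fun y => (laplace_pdf b (y - t))%:E) \o (fun x => x + t)%R) x); last first.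
  by apply: eq_integral => x _ /=; rewrite addrK.
rewrite -(ge0_integral_pushforward (measurable_shift t)) //; last first.
  exact: measurable_funS mpdf_shift.
rewrite (eq_measure_integral leb);
  [|exact: measurable_shift|by move=> ? A mA _; exact: lebesgue_measure_shift].
rewrite -ge0_integralZl_EFin //; last first.
  exact: measurable_funS (measurable_laplace_pdf b).
apply: ge0_le_integral => //.
- exact: measurable_funS mpdf_shift.
- apply/measurable_EFinP; apply: measurable_funM => //.
  by apply/measurable_EFinP; exact: measurable_funS (measurable_laplace_pdf b).
- by move=> y _; rewrite lee_fin laplace_pdf_shift_le.
Qed.

End laplace_shift.

Lemma laplace_noise_shift_le {R : realType} {d : measure_display}
    {T : measurableType d} {P : probability T R} {X : T -> R} {b : R} (t : R) :
  0 < b ->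
  (forall A, measurable A ->
     P (X @^-1` A) = (\int[lebesgue_measure]_(x in A) (laplace_pdf b x)%:E)%E) ->
  forall E, measurable E ->
  (P (X @^-1` ((fun x => x + t)%R @^-1` E)) <=
   (expR (`|t| / b))%:E * P (X @^-1` E))%E.
Proof.
move=> b0 lawX E mE; rewrite !lawX //; first exact: laplace_mass_shift_le.
by rewrite -[F in measurable F]setTI; exact: measurable_shift.
Qed.

Definition relu_unit {R : realType} (c : R) (b : bool) (x : R) : R :=
  if b then Num.max (c + x) 0 else 0.

Lemma measurable_relu_unit {R : realType} (c : R) (b : bool) :
  measurable_fun [set: R] (relu_unit c b).
Proof.
case: b; rewrite /relu_unit; last exact: measurable_cst.
by apply: measurable_maxr => //; exact: measurable_funD.
Qed.

Lemma relu_unit_preimage_shift {R : realType} (c c' : R) (b : bool) (B : set R) :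
  relu_unit c b @^-1` B =
  (if b then (fun x => x + (c - c')) @^-1` (relu_unit c' b @^-1` B)
   else relu_unit c' b @^-1` B).
Proof.
case: b => //; apply/seteqP; split => x; rewrite /relu_unit /=;
  by rewrite (_ : c' + (x + (c - c')) = c + x) //; ring.
Qed.

Section rectangles.
Context {R : realType} {N : nat} {d : measure_display} {T : measurableType d}
  (P : probability T R) (s : 'I_N -> T -> bool) (L : 'I_N -> T -> R).
Hypotheses (ms : forall i, measurable_fun [set: T] (s i))
  (mL : forall i, measurable_fun [set: T] (L i))
  (indep : mutually_independent P s L).
Local Open Scope ereal_scope.

Definition out_rect (c : 'I_N -> R) (B : 'I_N -> set R) : set T :=
  \big[setI/setT]_(i < N) [set w | B i (relu_unit (c i) (s i w) (L i w))].

Definition selected_event (z : {ffun 'I_N -> bool}) (c : 'I_N -> R)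
    (B : 'I_N -> set R) : set T :=
  \big[setI/setT]_(i < N)
    (s i @^-1` [set z i] `&` L i @^-1` (relu_unit (c i) (z i) @^-1` B i)).

Lemma out_rect_split c B :
  out_rect c B = \big[setU/set0]_(z : {ffun 'I_N -> bool}) selected_event z c B.
Proof.
apply/seteqP; split => w.
  move/in_bigsetI => Bw; apply/in_bigsetU; exists [ffun i => s i w].
  split=> //; first exact: mem_index_enum.
  by apply/in_bigsetI => i ii _; rewrite ffunE; split => //; exact: Bw.
move/in_bigsetU => [z [_ _ /in_bigsetI zw]]; apply/in_bigsetI => i ii _.
by have [/= <-] := zw i ii isT.
Qed.

Lemma selected_event_disjoint c B (z z' : {ffun 'I_N -> bool}) : z != z' ->
  selected_event z c B `&` selected_event z' c B = set0.
Proof.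
move=> zz'; apply/seteqP; split => // w [/in_bigsetI zw /in_bigsetI z'w].
apply/negP: zz'; apply/negPn/eqP/ffunP => i.
have [/= <- _] := zw i (mem_index_enum _) isT.
by have [/= <- _] := z'w i (mem_index_enum _) isT.
Qed.

Lemma prob_out_rect c B : (forall i, measurable (B i)) ->
  P (out_rect c B) = \sum_(z : {ffun 'I_N -> bool}) \prod_(i < N)
    (P (s i @^-1` [set z i]) * P (L i @^-1` (relu_unit (c i) (z i) @^-1` B i))).
Proof.
move=> mB; have mpre i b : measurable (relu_unit (c i) b @^-1` B i).
  by rewrite -[E in measurable E]setTI; exact: measurable_relu_unit.
rewrite out_rect_split content_disjoint_bigsetU //.
- apply: eq_bigr => z _; exact: (indep (fun i => [set z i])
    (fun i => relu_unit (c i) (z i) @^-1` B i) (fun i => mpre i (z i))).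
- exact: index_enum_uniq.
- move=> z; apply: bigsetI_measurable => i _; apply: measurableI.
    by rewrite -[E in measurable E]setTI; exact: ms.
  by rewrite -[E in measurable E]setTI; exact: (mL i measurableT _ (mpre i (z i))).
- by move=> z z'; exact: selected_event_disjoint.
Qed.

(* If shifting the noise of unit i by c_i - c'_i costs at most a factor
   e^{k_i}, then the output rectangles for c and c' differ by at most
   e^{sum_i k_i}; the selection factors are common to both sides. *)
Lemma out_rect_le (c c' : 'I_N -> R) (B : 'I_N -> set R) (k : 'I_N -> R) :
  (forall i, measurable (B i)) -> (forall i, 0 <= k i)%R ->
  (forall i E, measurable E ->
     P (L i @^-1` ((fun x => x + (c i - c' i))%R @^-1` E)) <=
     (expR (k i))%:E * P (L i @^-1` E)) ->
  P (out_rect c B) <= (expR (\sum_(i < N) k i))%:E * P (out_rect c' B).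
Proof.
move=> mB k0 shift_le; rewrite !prob_out_rect // ge0_sume_distrr; last first.
  by move=> z _; apply: prode_ge0 => i _; exact: mule_ge0.
apply: lee_sum => z _; rewrite expR_sum -prodEFin -big_split /=.
apply: lee_prod_ge0 => i _; first exact: mule_ge0.
rewrite muleCA; apply: lee_pmul => //.
rewrite (relu_unit_preimage_shift _ (c' i)); case: (z i).
  by apply: shift_le; rewrite -[E in measurable E]setTI; exact: measurable_relu_unit.
by rewrite -[X in X <= _]mul1e lee_wpmul2r // lee_fin -expR0 ler_expR.
Qed.

End rectangles.

Section clipK.
Context {R : realType} {N K : nat} {C : R} (C0 : 0 <= C).

Lemma clipK_range (v : 'I_N -> R) i : 0 <= clipK v C K i <= C.
Proof.
rewrite /clipK; case: ifP => _; last by rewrite lexx C0.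
by rewrite ge_min lexx orbT le_min C0 le_max lexx orbT.
Qed.

Lemma clipK_dist (v v' : 'I_N -> R) i : `|clipK v C K i - clipK v' C K i| <= C.
Proof.
have /andP[? ?] := clipK_range v i; have /andP[? ?] := clipK_range v' i.
by rewrite ler_norml; apply/andP; split; lra.
Qed.

End clipK.

Section budget.
Context {R : realType} {N K : nat} {C eps_l : R} {U : 'I_N -> R}.
Hypotheses (N0 : (0 < N)%N) (K0 : (0 < K)%N) (C0 : 0 < C) (el0 : 0 < eps_l)
  (U0 : forall i, 0 < U i).

Lemma vsum_gt0 : 0 < vsum U.
Proof.
rewrite /vsum (bigD1 (Ordinal N0)) //= ltr_pwDl ?U0 //.
by apply: sumr_ge0 => i _; exact: ltW.
Qed.

Lemma lap_scale_gt0 i : 0 < lap_scale K C eps_l U i.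
Proof.
by rewrite /lap_scale divr_gt0 ?mulr_gt0 ?ltr0n ?vsum_gt0.
Qed.

(* The per-coordinate Laplace privacy losses C / b_i add up to
   eps_l / (2K): the budget eps_l U_i / sum_j U_j of coordinate i is spent
   on a sensitivity of 2KC. *)
Lemma laplace_loss_sum :
  \sum_(i < N) C / lap_scale K C eps_l U i = eps_l / (2 * K%:R).
Proof.
have vs0 := vsum_gt0; have K0' : 0 < K%:R :> R by rewrite ltr0n.
transitivity (\sum_(i < N) eps_l / (2 * K%:R * vsum U) * U i).
  apply: eq_bigr => i _; rewrite /lap_scale; have := U0 i => Ui.
  by field; rewrite !gt_eqF.
by rewrite -mulr_sumr -/(vsum U); field; rewrite !gt_eqF.
Qed.

End budget.

Section r3elu_coordinates.
Context {R : realType} {N : nat} (K : nat) (C : R) {d : measure_display}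
  {T : measurableType d} (s : 'I_N -> T -> bool) (L : 'I_N -> T -> R).

Definition r3elu_sample (v : 'I_N -> R) (w : T) : N.-tuple R :=
  r3elu_out K C v (fun i => s i w) (fun i => L i w).

Lemma tnth_r3elu_sample v w i :
  tnth (r3elu_sample v w) i = relu_unit (clipK v C K i) (s i w) (L i w).
Proof. by rewrite tnth_mktuple. Qed.

Lemma measurable_r3elu_sample v :
  (forall i, measurable_fun [set: T] (s i)) ->
  (forall i, measurable_fun [set: T] (L i)) ->
  measurable_fun [set: T] (r3elu_sample v).
Proof.
move=> ms mL; apply/measurable_fun_tnthP => i.
rewrite (_ : _ \o _ = fun w =>
    if s i w then relu_unit (clipK v C K i) true (L i w) else 0).
  exact: measurable_fun_ifT (ms i)
    (measurableT_comp (measurable_relu_unit _ true) (mL i)) (measurable_cst _).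
by apply: funext => w /=; rewrite tnth_r3elu_sample /relu_unit; case: (s i w).
Qed.

Lemma preimage_r3elu_rectangle v (B : 'I_N -> set R) :
  r3elu_sample v @^-1` rectangle B = out_rect s L (clipK v C K) B.
Proof.
apply/seteqP; split => w; rewrite /out_rect in_bigsetI /= => Bw i.
  by move=> _ _; rewrite -tnth_r3elu_sample; exact: Bw.
by rewrite tnth_r3elu_sample; exact: Bw i (mem_index_enum _) isT.
Qed.

End r3elu_coordinates.

Theorem corollary6 (R : realType) (N K : nat) (C eps_p eps_l : R)
  (U : 'I_N -> R)
  (d : measure_display) (T : measurableType d) (P : probability T R)
  (s : 'I_N -> T -> bool) (L : 'I_N -> T -> R) :
  (1 <= K)%N -> (K <= N)%N -> 0 < C -> 0 < eps_p -> 0 < eps_l ->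
  (forall i, 0 < U i) ->
  (forall i, measurable_fun [set: T] (s i)) ->
  (forall i, measurable_fun [set: T] (L i)) ->
  (forall i, P (s i @^-1` [set true]) = (sel_prob K eps_p U i)%:E) ->
  (forall i (A : set R), measurable A ->
     P (L i @^-1` A) =
     (\int[lebesgue_measure]_(x in A) (laplace_pdf (lap_scale K C eps_l U i) x)%:E)%E) ->
  mutually_independent P s L ->
  forall (v v' : 'I_N -> R) (S : set (N.-tuple R)), measurable S ->
    (P [set w | S (r3elu_out K C v (fun i => s i w) (fun i => L i w))]
     <= (expR (eps_p + eps_l))%:E *
        P [set w | S (r3elu_out K C v' (fun i => s i w) (fun i => L i w))])%E.
Proof.
move=> K1 KN C0 ep0 el0 U0 ms mL _ lawL indep v v' S mS.
have N0 : (0 < N)%N := leq_trans K1 KN.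
have b0 := lap_scale_gt0 N0 K1 C0 el0 U0.
pose loss i := C / lap_scale K C eps_l U i.
have noise_shift i E : measurable E ->
    (P (L i @^-1` ((fun x => x + (clipK v C K i - clipK v' C K i))%R @^-1` E)) <=
     (expR (loss i))%:E * P (L i @^-1` E))%E.
  move=> mE; apply: le_trans (laplace_noise_shift_le _ (b0 i) (lawL i) _ mE) _.
  by rewrite lee_wpmul2r // lee_fin ler_expR ler_pM2r ?invr_gt0 // clipK_dist ?ltW.
have loss_le : \sum_(i < N) loss i <= eps_p + eps_l.
  have K1' : 1 <= K%:R :> R by rewrite ler1n.
  by rewrite laplace_loss_sum // ler_pdivrMr ?mulr_gt0 ?ltr0n //; nra.
apply: (law_le_of_rectangles P (r3elu_sample K C s L v)
  (r3elu_sample K C s L v')) mS; [exact: measurable_r3elu_sample..|] => B mB.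
rewrite !preimage_r3elu_rectangle; apply: le_trans (out_rect_le P s L ms mL indep
  _ _ _ _ mB (fun i => divr_ge0 (ltW C0) (ltW (b0 i))) noise_shift) _.
by rewrite lee_wpmul2r // lee_fin ler_expR.
Qed.
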